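(* Let $\mathcal{C}$ be a binary linear code with minimum distance $d(\mathcal{C}) \le 3$. Then every parity-check matrix $H$ for $\mathcal{C}$ satisfies $s(H) = d(\mathcal{C})$, and therefore $\rho(\mathcal{C}) = r(\mathcal{C})$.
   Context: A parity-check matrix for a linear code $\mathcal{C}$ is any matrix (possibly with linearly dependent rows) whose rows span the dual code $\mathcal{C}^\perp$. $d(\mathcal{C})$ is the minimum Hamming distance. For a parity-check matrix $H$, the stopping distance $s(H)$ is the largest integer such that for every set of $s(H)-1$ or fewer columns of $H$, the projection of $H$ onto those columns contains at least one row of Hamming weight exactly one. The redundancy $r(\mathcal{C})$ is the minimum number of rows of a parity-check matrix for $\mathcal{C}$ (i.e. $n-\dim\mathcal{C}$). The stopping redundancy $\rho(\mathcal{C})$ is the smallest number of rows of a parity-check matrix $H$ for $\mathcal{C}$ with $s(H) = d(\mathcal{C})$. *)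

From HB Require Import structures.
From mathcomp Require Import all_boot all_order all_algebra all_fingroup.
Set Implicit Arguments. Unset Strict Implicit. Unset Printing Implicit Defensive.
Import GRing.Theory.
Local Open Scope ring_scope.

(* A binary linear code of length n is represented by a (generator) matrix
   G : 'M['F_2]_(k, n); the code is the row space of G. *)

Definition wt (n : nat) (v : 'rV['F_2]_n) : nat := #|[set j | v 0 j != 0]|.

Definition codeword (k n : nat) (G : 'M['F_2]_(k, n)) (c : 'rV['F_2]_n) : bool :=
  (c <= G)%MS.

Definition dual_code (k n : nat) (G : 'M['F_2]_(k, n)) : 'M['F_2]_n :=
  kermx G^T.

(* H is a parity-check matrix for the code: its rows span the dual code
   (rows may be linearly dependent). *)
Definition parity_check (k n m : nat) (G : 'M['F_2]_(k, n)) (H : 'M['F_2]_(m, n))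
  : bool := (H == dual_code G)%MS.

Definition is_min_dist (k n : nat) (G : 'M['F_2]_(k, n)) (d : nat) : Prop :=
  (exists2 c, codeword G c & (c != 0) && (wt c == d)) /\
  (forall c, codeword G c -> c != 0 -> (d <= wt c)%N).

Definition redundancy (k n : nat) (G : 'M['F_2]_(k, n)) : nat := (n - \rank G)%N.

Definition has_weight_one_row (m n : nat) (H : 'M['F_2]_(m, n)) (S : {set 'I_n})
  : bool := [exists i, #|[set j in S | H i j != 0]| == 1%N].

Definition stop_ok (m n : nat) (H : 'M['F_2]_(m, n)) (s : nat) : Prop :=
  forall S : {set 'I_n}, (0 < #|S|)%N -> (#|S| <= s.-1)%N -> has_weight_one_row H S.

Definition is_stopping_distance (m n : nat) (H : 'M['F_2]_(m, n)) (s : nat) : Prop :=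
  stop_ok H s /\ (forall t, stop_ok H t -> (t <= s)%N).

Definition is_stopping_redundancy (k n : nat) (G : 'M['F_2]_(k, n)) (d rho : nat)
  : Prop :=
  (exists H : 'M['F_2]_(rho, n), parity_check G H /\ is_stopping_distance H d) /\
  (forall m (H : 'M['F_2]_(m, n)), parity_check G H -> is_stopping_distance H d ->
     (rho <= m)%N).

(* Over F_2 the product of a row vector v with a row h of H is the parity of
   the number of columns in supp v where h is nonzero.  Hence the support of a
   codeword meets no row of H in exactly one column, which gives s(H) <= d(C)
   for every parity-check matrix.  Conversely, a set S of at most two columns
   meeting no row in exactly one column meets every row in an even number of
   columns, so its indicator vector is a codeword and |S| >= d(C); when
   d(C) <= 3 this covers every S with |S| <= d(C) - 1, so s(H) = d(C) for every
   H, and rho(C) is attained by any basis of the dual code. *)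
From mathcomp Require Import all_boot all_order all_algebra all_fingroup.
From mathcomp Require Import zify.
Import GRing.Theory.
Local Open Scope ring_scope.
Set Implicit Arguments. Unset Strict Implicit. Unset Printing Implicit Defensive.

Lemma F2_neq0_eq1 (x : 'F_2) : x != 0 -> x = 1.
Proof. by case: x => -[|[|]] //= *; apply/val_inj. Qed.

Lemma F2_char2 : 2%:R = 0 :> 'F_2.
Proof. exact/val_inj. Qed.

Definition supp (n : nat) (v : 'rV['F_2]_n) : {set 'I_n} := [set j | v 0 j != 0].

Definition indicator (n : nat) (S : {set 'I_n}) : 'rV['F_2]_n := \row_j (j \in S)%:R.

Lemma supp_indicator (n : nat) (S : {set 'I_n}) : supp (indicator S) = S.
Proof.
by apply/setP => j; rewrite inE mxE; case: (j \in S); rewrite ?eqxx ?oner_eq0.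
Qed.

Lemma wt_indicator (n : nat) (S : {set 'I_n}) : wt (indicator S) = #|S|.
Proof. by rewrite /wt -/(supp _) supp_indicator. Qed.

Lemma wt_gt0 (n : nat) (v : 'rV['F_2]_n) : (0 < wt v)%N = (v != 0).
Proof.
apply/card_gt0P/idP => [[j] | v0].
  by rewrite inE; apply: contraNneq => ->; rewrite mxE.
have [j vj] : exists j, v 0 j != 0.
  apply/existsP; apply: contraR v0 => /existsPn vj.
  by apply/eqP/matrixP => i j; rewrite ord1 mxE; apply/eqP/negPn/vj.
by exists j; rewrite inE.
Qed.

Lemma mulmx_tr_F2 (m n : nat) (v : 'rV['F_2]_n) (H : 'M['F_2]_(m, n)) i :
  (v *m H^T) 0 i = #|[set j in supp v | H i j != 0]|%:R.
Proof.
rewrite mxE -sumr_const (big_mkcond (fun j => j \in _)) /=.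
apply: eq_bigr => j _; rewrite !inE mxE.
have [->|/F2_neq0_eq1 ->] := eqVneq (v 0 j) 0; first by rewrite mul0r.
by have [->|/F2_neq0_eq1 ->] := eqVneq (H i j) 0; rewrite ?mulr0 ?mulr1.
Qed.

Lemma codeword_parity_check (k n m : nat) (G : 'M['F_2]_(k, n))
    (H : 'M['F_2]_(m, n)) (v : 'rV['F_2]_n) :
  parity_check G H -> codeword G v = (v *m H^T == 0).
Proof.
move=> /andP[HK KH]; apply/idP/eqP => [/submxP[D ->] | vH].
  have GH : G *m H^T = 0.
    by apply/trmx_inj; rewrite trmx_mul trmxK trmx0; apply/sub_kermxP.
  by rewrite -mulmxA GH mulmx0.
have /submxP[D cokerD] : ((cokermx G)^T <= H)%MS.
  by apply: submx_trans KH; apply/sub_kermxP; rewrite -trmx_mul mulmx_coker trmx0.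
by rewrite /codeword submxE -(trmxK (cokermx G)) cokerD trmx_mul mulmxA vH mul0mx.
Qed.

Lemma codeword_no_weight_one_row (k n m : nat) (G : 'M['F_2]_(k, n))
    (H : 'M['F_2]_(m, n)) (c : 'rV['F_2]_n) :
  parity_check G H -> codeword G c -> ~~ has_weight_one_row H (supp c).
Proof.
move=> pcH cG; apply/existsP => -[i /eqP one_col].
move: cG; rewrite (codeword_parity_check _ pcH) => /eqP/matrixP/(_ 0 i).
by rewrite mulmx_tr_F2 one_col mxE => /eqP; rewrite oner_eq0.
Qed.

(* With |S| <= 2, "no row meets S exactly once" means every row meets S in an
   even number of columns. *)
Lemma indicator_codeword (k n m : nat) (G : 'M['F_2]_(k, n))
    (H : 'M['F_2]_(m, n)) (S : {set 'I_n}) :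
  parity_check G H -> (#|S| <= 2)%N -> ~~ has_weight_one_row H S ->
  codeword G (indicator S).
Proof.
move=> pcH S2 /existsPn no_one; rewrite (codeword_parity_check _ pcH).
apply/eqP/matrixP => i0 i; rewrite ord1 mulmx_tr_F2 supp_indicator mxE.
have : (#|[set j in S | H i j != 0%R]| <= 2)%N.
  apply: leq_trans S2; apply/subset_leq_card/subsetP => j.
  by rewrite inE => /andP[].
have := no_one i; case: #|_| => [|[|[|]]] //= _ _; exact: F2_char2.
Qed.

Lemma stop_ok_le_min_dist (k n m : nat) (G : 'M['F_2]_(k, n))
    (H : 'M['F_2]_(m, n)) (d t : nat) :
  is_min_dist G d -> parity_check G H -> stop_ok H t -> (t <= d)%N.
Proof.
move=> [[c cG /andP[c0 /eqP wc]] _] pcH okH; rewrite leqNgt; apply/negP => dt.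
have c_pos : (0 < #|supp c|)%N by rewrite -/(wt c) wt_gt0.
have : (#|supp c| <= t.-1)%N by rewrite -/(wt c) wc; lia.
by move/(okH _ c_pos); apply/negP/(codeword_no_weight_one_row pcH).
Qed.

Lemma stop_ok_min_dist (k n m : nat) (G : 'M['F_2]_(k, n))
    (H : 'M['F_2]_(m, n)) (d : nat) :
  is_min_dist G d -> (d <= 3)%N -> parity_check G H -> stop_ok H d.
Proof.
move=> [_ dmin] d3 pcH S S_pos Sd; apply: contraT => no_one.
have /dmin : codeword G (indicator S).
  by apply: indicator_codeword no_one => //; lia.
by rewrite -wt_gt0 wt_indicator => /(_ S_pos); lia.
Qed.

Lemma stopping_distance_min_dist (k n m : nat) (G : 'M['F_2]_(k, n))
    (H : 'M['F_2]_(m, n)) (d : nat) :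
  is_min_dist G d -> (d <= 3)%N -> parity_check G H -> is_stopping_distance H d.
Proof.
move=> dG d3 pcH; split; first exact: stop_ok_min_dist dG d3 pcH.
by move=> t; apply: stop_ok_le_min_dist dG pcH.
Qed.

Lemma rank_dual_code (k n : nat) (G : 'M['F_2]_(k, n)) :
  \rank (dual_code G) = redundancy G.
Proof. by rewrite mxrank_ker mxrank_tr. Qed.

Lemma redundancy_le_rows (k n m : nat) (G : 'M['F_2]_(k, n))
    (H : 'M['F_2]_(m, n)) :
  parity_check G H -> (redundancy G <= m)%N.
Proof. by rewrite -rank_dual_code => /eqmxP <-; apply: rank_leq_row. Qed.

Lemma exists_parity_check_redundancy (k n : nat) (G : 'M['F_2]_(k, n)) :
  exists H : 'M['F_2]_(redundancy G, n), parity_check G H.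
Proof.
exists (castmx (rank_dual_code G, erefl n) (row_base (dual_code G))).
by apply/eqmxP; apply: eqmx_trans (eqmx_cast _ _) (eq_row_base _).
Qed.

Unset Implicit Arguments.
Theorem theorem3 (k n : nat) (G : 'M['F_2]_(k, n)) (d : nat) :
  is_min_dist G d -> (d <= 3)%N ->
  (forall m (H : 'M['F_2]_(m, n)), parity_check G H -> is_stopping_distance H d) /\
  is_stopping_redundancy G d (redundancy G).
Proof.
move=> dG d3.
have sdist m (H : 'M['F_2]_(m, n)) : parity_check G H -> is_stopping_distance H d.
  exact: stopping_distance_min_dist.
have [H0 pcH0] := exists_parity_check_redundancy G.
split=> //; split; first by exists H0; split; last exact: sdist.
by move=> m H pcH _; apply: redundancy_le_rows pcH.
Qed.
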